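(* Let $s,r\in\mathbb{N}$ and let $\mathcal{C}$ be a class of finite graphs such that each $G\in\mathcal{C}$ is obtained from some complete bipartite graph $K_{n,m}$ with $n\le m\le 2^{sn+r}$ by possibly adding new edges (on the same vertex set). Then $\mathcal{C}$ is $\mathrm{MSO}_2$-orderable.
   Context: For $G=\langle V,E\rangle$, $\lceil G\rceil=\langle V\cup E,\mathrm{inc}\rangle$ (universe $V\cup E$, incidence relation). An MSO-formula $\varphi(x,y;Z_0,\dots,Z_{k-1})$ defines an order on a class $\mathcal{K}$ of structures if for every non-empty $\mathfrak{A}\in\mathcal{K}$ there are $P_0,\dots,P_{k-1}\subseteq A$ with $\{(a,b):\mathfrak{A}\models\varphi(a,b;\bar P)\}$ a linear order on $A$. A graph class is $\mathrm{MSO}_2$-orderable if some MSO-formula defines an order on $\{\lceil G\rceil : G\in\mathcal{C}\}$. *)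

From mathcomp Require Import all_boot.
Set Implicit Arguments. Unset Strict Implicit. Unset Printing Implicit Defensive.

Record graph := Graph {
  gV :> finType;
  gadj : rel gV;
  gadj_sym : symmetric gadj;
  gadj_irr : irreflexive gadj }.

Definition is_edge (G : graph) (A : {set gV G}) : bool :=
  [exists u : gV G, exists v : gV G, gadj u v && (A == [set u; v])].
Definition edge_t (G : graph) : finType := {A : {set gV G} | is_edge A}.

(** Universe of the incidence structure [G] : V + E. *)
Definition inc_univ (G : graph) : finType := (gV G + edge_t G)%type.

Definition inc (G : graph) : rel (inc_univ G) :=
  fun x y => match x, y with
             | inl v, inr e => v \in val e
             | _, _ => false
             end.

(** Monadic second-order logic over one binary relation symbol R.
    First-order variables and set variables are indexed by nat (named variables). *)
Inductive mso : Type :=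
| MRel of nat & nat
| MEq of nat & nat
| MMem of nat & nat
| MNeg of mso
| MAnd of mso & mso
| MEx1 of nat & mso
| MEx2 of nat & mso.

Definition upd {A : Type} (f : nat -> A) (i : nat) (a : A) : nat -> A :=
  fun j => if j == i then a else f j.

Fixpoint msat (T : finType) (R : rel T) (phi : mso)
  (nu : nat -> T) (mu : nat -> {set T}) : Prop :=
  match phi with
  | MRel i j => R (nu i) (nu j)
  | MEq i j => nu i = nu j
  | MMem i j => nu i \in mu j
  | MNeg p => ~ msat R p nu mu
  | MAnd p q => msat R p nu mu /\ msat R q nu mu
  | MEx1 i p => exists a : T, msat R p (upd nu i a) mu
  | MEx2 j p => exists A : {set T}, msat R p nu (upd mu j A)
  end.

Fixpoint mso_scoped (fo so : nat -> bool) (phi : mso) : bool :=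
  match phi with
  | MRel i j | MEq i j => fo i && fo j
  | MMem i j => fo i && so j
  | MNeg p => mso_scoped fo so p
  | MAnd p q => mso_scoped fo so p && mso_scoped fo so q
  | MEx1 i p => mso_scoped (fun n => (n == i) || fo n) so p
  | MEx2 j p => mso_scoped fo (fun n => (n == j) || so n) p
  end.

(** phi(x,y; Z_0..Z_{k-1}): free FO variables among {0,1} (x = 0, y = 1),
    free set variables among {0,..,k-1}. *)
Definition mso_formula_xyZ (k : nat) (phi : mso) : bool :=
  mso_scoped (fun n => n < 2) (fun n => n < k) phi.

Definition linear_order (T : Type) (le : T -> T -> Prop) : Prop :=
  (forall a, le a a) /\
  (forall a b, le a b -> le b a -> a = b) /\
  (forall a b c, le a b -> le b c -> le a c) /\
  (forall a b, le a b \/ le b a).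

Definition defined_rel (T : finType) (R : rel T) (phi : mso)
  (P : nat -> {set T}) (a b : T) : Prop :=
  msat R phi (fun n => if n == 0 then a else b) P.

Definition defines_order_on (k : nat) (phi : mso) (T : finType) (R : rel T) : Prop :=
  exists P : nat -> {set T},
    (forall j, k <= j -> P j = set0) /\ linear_order (defined_rel R phi P).

Definition MSO2_orderable (C : graph -> Prop) : Prop :=
  exists (k : nat) (phi : mso), mso_formula_xyZ k phi /\
    forall G : graph, C G -> 0 < #|inc_univ G| -> defines_order_on k phi (@inc G).

Definition supergraph_of_Knm (G : graph) (n m : nat) : Prop :=
  exists A B : {set gV G},
    [disjoint A & B] /\ A :|: B = [set: gV G] /\ #|A| = n /\ #|B| = m /\
    (forall a b, a \in A -> b \in B -> gadj a b).

From mathcomp Require Import all_boot zify.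
From Stdlib Require Import Classical.
Set Implicit Arguments. Unset Strict Implicit. Unset Printing Implicit Defensive.

(** Let V = A ⊔ B with |A| = n <= |B| = m and all A-B edges present, and put
    K = s + r, so that m <= 2^(K (n+1)).  A single formula with K + 2 set
    parameters orders every such incidence structure [G]:
    - vertices come before edges;
    - A comes before B; A is ordered through a "staircase" Z_1 of A-B edges
      (the set of B-vertices a stair edge joins to u shrinks as u grows);
    - a vertex w of B stores the binary word of its position in K blocks of
      n + 1 bits: for t < K, the set Z_(t+2) holds the first bit of block t
      on w itself and the other n bits on the edges from w to A, read in the
      order of A.  Two vertices of B are compared colexicographically,
      block by block;
    - edges are compared colexicographically by the sets of their ends. *)

Definition MOr p q := MNeg (MAnd (MNeg p) (MNeg q)).
Definition MImp p q := MNeg (MAnd p (MNeg q)).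
Definition MAll i p := MNeg (MEx1 i (MNeg p)).
(* [MTrue] holds on every non-empty structure. *)
Definition MTrue := MEx1 0 (MEq 0 0).
Definition MFalse := MNeg MTrue.
Definition MBigAnd (l : seq nat) (F : nat -> mso) :=
  foldr (fun t acc => MAnd (F t) acc) MTrue l.
Definition MBigOr (l : seq nat) (F : nat -> mso) :=
  foldr (fun t acc => MOr (F t) acc) MFalse l.

Lemma ex_iff (A : Type) (F G : A -> Prop) :
  (forall a, F a <-> G a) -> (exists a, F a) <-> (exists a, G a).
Proof. by move=> FG; split=> -[a Ha]; exists a; apply/FG. Qed.

Lemma imp_iff (A B C : Prop) : (B <-> C) -> (A -> B) <-> (A -> C).
Proof. by move=> BC; split=> H /H /BC. Qed.

Lemma all_iff (A : Type) (F G : A -> Prop) :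
  (forall a, F a <-> G a) -> (forall a, F a) <-> (forall a, G a).
Proof. by move=> FG; split=> H a; apply/FG. Qed.

Section Connectives.
Variables (T : finType) (R : rel T).
Implicit Types (p q : mso) (nu : nat -> T) (mu : nat -> {set T}).

(* Unfolding equations for the primitive connectives, used as targeted
   rewrite rules: simplification would also unfold the defined ones. *)
Lemma msat_neg p nu mu : msat R (MNeg p) nu mu <-> ~ msat R p nu mu.
Proof. by []. Qed.

Lemma msat_and p q nu mu :
  msat R (MAnd p q) nu mu <-> msat R p nu mu /\ msat R q nu mu.
Proof. by []. Qed.

Lemma msat_ex i p nu mu :
  msat R (MEx1 i p) nu mu <-> exists a, msat R p (upd nu i a) mu.
Proof. by []. Qed.

Lemma msat_or p q nu mu :
  msat R (MOr p q) nu mu <-> msat R p nu mu \/ msat R q nu mu.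
Proof. by rewrite /=; tauto. Qed.

Lemma msat_imp p q nu mu :
  msat R (MImp p q) nu mu <-> (msat R p nu mu -> msat R q nu mu).
Proof. by rewrite /=; split=> [H Hp|]; [apply: NNPP; tauto | tauto]. Qed.

Lemma msat_all i p nu mu :
  msat R (MAll i p) nu mu <-> forall a, msat R p (upd nu i a) mu.
Proof.
split=> [H a | H [a Ha]]; last exact/Ha/H.
by apply: NNPP => Hn; apply: H; exists a.
Qed.

Lemma msat_true nu mu : 0 < #|T| -> msat R MTrue nu mu.
Proof. by move=> /card_gt0P [a _]; exists a. Qed.

Lemma msat_bigAnd l F nu mu : 0 < #|T| ->
  msat R (MBigAnd l F) nu mu <-> forall t, t \in l -> msat R (F t) nu mu.
Proof.
move=> T0; elim: l => [|p l IH] /=; first by split=> // _; apply: msat_true.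
rewrite IH; split=> [[Hp Hl] q | H].
  by rewrite inE => /predU1P [-> //|]; apply: Hl.
by split=> [|q Hq]; apply: H; rewrite inE ?eqxx ?Hq ?orbT.
Qed.

Lemma msat_bigOr l F nu mu : 0 < #|T| ->
  msat R (MBigOr l F) nu mu <-> exists2 t, t \in l & msat R (F t) nu mu.
Proof.
move=> T0; elim: l => [|p l IH].
  by split=> [/= H|[]//]; case: H; apply: msat_true.
rewrite [MBigOr _ _]/= msat_or IH; split=> [[Hp|[q Hq Hq']] | [q]].
- by exists p; rewrite ?inE ?eqxx.
- by exists q; rewrite // inE Hq orbT.
- by rewrite inE => /predU1P [-> | Hq] Hq'; [left | right; exists q].
Qed.

End Connectives.

Lemma scoped_bigAnd (fo so : nat -> bool) l F :
  (forall t, t \in l -> mso_scoped fo so (F t)) -> mso_scoped fo so (MBigAnd l F).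
Proof.
elim: l => [|t l IH] H //=.
by rewrite H ?inE ?eqxx //= IH // => t' Ht'; apply: H; rewrite inE Ht' orbT.
Qed.

Lemma scoped_bigOr (fo so : nat -> bool) l F :
  (forall t, t \in l -> mso_scoped fo so (F t)) -> mso_scoped fo so (MBigOr l F).
Proof.
elim: l => [|t l IH] H //=.
by rewrite H ?inE ?eqxx //= IH // => t' Ht'; apply: H; rewrite inE Ht' orbT.
Qed.

Lemma linear_order_rank (T : Type) (le : T -> T -> Prop) (rk : T -> nat) :
  injective rk -> (forall a b, le a b <-> rk a <= rk b) -> linear_order le.
Proof.
move=> rk_inj leE; split; [|split; [|split]].
- by move=> a; apply/leE.
- by move=> a b /leE ab /leE ba; apply: rk_inj; lia.
- by move=> a b c /leE ab /leE bc; apply/leE; lia.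
- by move=> a b; case: (leqP (rk a) (rk b)) => ab; [left | right]; apply/leE; lia.
Qed.

(** Comparing numbers is comparing words colexicographically:
    every position where [f] beats [g] is dominated by a higher one where [g]
    beats [f].  This is the form in which MSO can compare two numbers. *)

Definition beats (f g : nat -> bool) q := f q && ~~ g q.

Definition colex (f g : nat -> bool) N := forall i, i < N -> beats f g i ->
  exists j, [/\ i < j, j < N & beats g f j].

Definition binval (f : nat -> bool) N := \sum_(i < N) f i * 2 ^ i.

Lemma binvalS f N : binval f N.+1 = binval f N + f N * 2 ^ N.
Proof. by rewrite /binval big_ord_recr. Qed.

Lemma binval_lt f N : binval f N < 2 ^ N.
Proof.
elim: N => [|N IH]; first by rewrite /binval big_ord0.
by rewrite binvalS expnS; case: (f N) => /=; lia.
Qed.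

Lemma colexS_eq f g N : f N = g N -> colex f g N.+1 <-> colex f g N.
Proof.
move=> fg; split=> H i Hi fgi.
  have [j [ij jN gfj]] := H i (ltnW Hi) fgi.
  exists j; split=> //; rewrite ltn_neqAle -ltnS jN andbT.
  by apply/eqP => Ej; move: gfj; rewrite Ej /beats fg andbN.
have [Ei | iN] := eqVneq i N; first by move: fgi; rewrite Ei /beats fg andbN.
have [j [ij jN gfj]] := H i ltac:(lia) fgi; exists j; split=> //; lia.
Qed.

Lemma colex_binval f g N : colex f g N <-> binval f N <= binval g N.
Proof.
elim: N => [|N IH]; first by rewrite /binval !big_ord0; split=> // _ i.
rewrite !binvalS; have hf := binval_lt f N; have hg := binval_lt g N.
case Ef: (f N); case Eg: (g N) => /=; try by rewrite colexS_eq ?Ef ?Eg // IH; lia.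
  split=> [H | ]; last lia.
  by have [j [? ? ?]] := H N (ltnSn N) ltac:(by rewrite /beats Ef Eg); lia.
split=> [_ | _ i Hi]; first lia.
have [Ei | iN] := eqVneq i N; first by rewrite /beats Ei Ef.
by exists N; rewrite /beats Eg Ef; split=> //; lia.
Qed.

Lemma binval_inj f g N :
  binval f N = binval g N -> forall i, i < N -> f i = g i.
Proof.
elim: N => [|N IH] // E i Hi; move: E; rewrite !binvalS.
have := binval_lt f N; have := binval_lt g N.
case Ef: (f N); case Eg: (g N) => /= hg hf E; try lia.
all: by have [-> | iN] := eqVneq i N; [rewrite Ef Eg | apply: IH; lia].
Qed.

Definition bit (j p : nat) := odd (j %/ 2 ^ p).

Lemma binval_bit j N : binval (bit j) N = j %% 2 ^ N.
Proof.
elim: N => [|N IH]; first by rewrite /binval big_ord0 expn0 modn1.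
rewrite binvalS IH /bit; have := divn_eq (j %% 2 ^ N.+1) (2 ^ N).
rewrite expnS -modn_divl modn2 modn_dvdm ?dvdn_mull //; lia.
Qed.

(** The words compared below have length [K * n.+1] and are cut into
    [K] blocks of width [n.+1]: position [t * n.+1 + o] is offset [o] of
    block [t].  The colex condition splits into one condition per block,
    which is how it is expressed by a formula with one set parameter per
    block. *)

Definition beats_above (f g : nat -> bool) K n t :=
  exists t', [/\ t < t', t' < K & exists2 o, o < n.+1 & beats g f (t' * n.+1 + o)].

Definition colex_block (f g : nat -> bool) K n t :=
  forall o, o < n.+1 -> beats f g (t * n.+1 + o) ->
    beats_above f g K n t \/
    exists o', [/\ o < o', o' < n.+1 & beats g f (t * n.+1 + o')].

Lemma beats_aboveE f g K n t : beats_above f g K n t <->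
  exists q, [/\ t.+1 * n.+1 <= q, q < K * n.+1 & beats g f q].
Proof.
split=> [[t' [tt' t'K [o on gfo]]] | [q [tq qK gfq]]].
  by exists (t' * n.+1 + o); split=> //; nia.
have qE := divn_eq q n.+1; have qo := ltn_pmod q (ltn0Sn n).
exists (q %/ n.+1); split; [nia | nia | exists (q %% n.+1) => //].
by rewrite -qE.
Qed.

Lemma colex_blocks f g K n :
  colex f g (K * n.+1) <-> forall t, t < K -> colex_block f g K n t.
Proof.
split=> [H t tK o on fgo | H p pN fgp].
  have [q [pq qN gfq]] := H (t * n.+1 + o) ltac:(nia) fgo.
  have [qt | tq] := ltnP q (t.+1 * n.+1).
    have qE : t * n.+1 + (q - t * n.+1) = q by lia.
    by right; exists (q - t * n.+1); rewrite qE; split=> //; nia.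
  by left; apply/beats_aboveE; exists q.
have pE := divn_eq p n.+1; have on := ltn_pmod p (ltn0Sn n).
move: (p %/ n.+1) (p %% n.+1) pE on pN fgp => t o -> on pN fgo.
have tK : t < K by nia.
have [/beats_aboveE [q [tq qK gfq]] | [o' [oo' o'n gfo']]] := H t tK o on fgo.
  by exists q; split=> //; nia.
by exists (t * n.+1 + o'); split=> //; nia.
Qed.

(** Its free variables are x = 0 and y = 1; its set
    parameters are Z_0 (the side A, as vertices), Z_1 (the "stair" edges that
    order A) and Z_(t+2) for t < K (the t-th layer of bits of the vertices of
    B).  Bound first-order variables use fixed indices 2 .. 9, chosen so that
    no subformula captures a variable of its context. *)

(* [z] is an edge, i.e. it is incident to something. *)
Definition IsEdge z := MEx1 2 (MRel 2 z).

Definition StairEdge u b :=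
  MEx1 6 (MAnd (MMem 6 1) (MAnd (MRel u 6) (MRel b 6))).

Definition ALe i j :=
  MAll 5 (MImp (MNeg (MMem 5 0)) (MImp (StairEdge j 5) (StairEdge i 5))).

Definition LayerEdge t a z :=
  MEx1 9 (MAnd (MMem 9 t.+2) (MAnd (MRel a 9) (MRel z 9))).

Definition GainA t x y :=
  MEx1 8 (MAnd (MMem 8 0) (MAnd (LayerEdge t 8 y) (MNeg (LayerEdge t 8 x)))).

Definition Gain t x y := MOr (MAnd (MMem y t.+2) (MNeg (MMem x t.+2))) (GainA t x y).

Definition GainAbove K t x y := MBigOr (iota t.+1 (K - t.+1)) (fun t' => Gain t' x y).

(* [y] beats [x] above the A-offset given by variable 7 in block [t]. *)
Definition GainAboveA K t x y :=
  MOr (GainAbove K t x y)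
      (MEx1 8 (MAnd (MMem 8 0) (MAnd (MNeg (ALe 8 7))
        (MAnd (LayerEdge t 8 y) (MNeg (LayerEdge t 8 x)))))).

Definition ColexBlock K t x y :=
  MAnd (MImp (MAnd (MMem x t.+2) (MNeg (MMem y t.+2)))
             (MOr (GainAbove K t x y) (GainA t x y)))
       (MAll 7 (MImp (MMem 7 0)
          (MImp (MAnd (LayerEdge t 7 x) (MNeg (LayerEdge t 7 y))) (GainAboveA K t x y)))).

Definition Colex K x y := MBigAnd (iota 0 K) (fun t => ColexBlock K t x y).

Definition VertexLe K i j :=
  MOr (MAnd (MMem i 0) (MNeg (MMem j 0)))
  (MOr (MAnd (MMem i 0) (MAnd (MMem j 0) (ALe i j)))
       (MAnd (MNeg (MMem i 0)) (MAnd (MNeg (MMem j 0)) (Colex K i j)))).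

Definition EdgeLe K :=
  MAll 3 (MImp (MAnd (MRel 3 0) (MNeg (MRel 3 1)))
    (MEx1 4 (MAnd (MNeg (VertexLe K 4 3)) (MAnd (MRel 4 1) (MNeg (MRel 4 0)))))).

Definition OrderFormula K :=
  MOr (MAnd (MNeg (IsEdge 0)) (MAnd (MNeg (IsEdge 1)) (VertexLe K 0 1)))
  (MOr (MAnd (MNeg (IsEdge 0)) (IsEdge 1))
       (MAnd (IsEdge 0) (MAnd (IsEdge 1) (EdgeLe K)))).

Section Scoping.
Variables (K : nat) (so : nat -> bool).
Hypothesis soK : forall j, j < K.+2 -> so j.

Lemma scoped_GainAbove (fo : nat -> bool) t x y :
  fo x -> fo y -> mso_scoped fo so (GainAbove K t x y).
Proof.
move=> fx fy; apply: scoped_bigOr => t'; rewrite mem_iota => /andP [tt' t'K].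
by rewrite /= fx fy !soK ?orbT //; lia.
Qed.

Lemma scoped_ColexBlock (fo : nat -> bool) t x y :
  fo x -> fo y -> t < K -> mso_scoped fo so (ColexBlock K t x y).
Proof.
move=> fx fy tK; rewrite /ColexBlock /GainAboveA [GainAbove _ _ _ _]lock /= -lock.
by rewrite !scoped_GainAbove ?fx ?fy ?soK ?orbT.
Qed.

Lemma scoped_Colex (fo : nat -> bool) x y :
  fo x -> fo y -> mso_scoped fo so (Colex K x y).
Proof.
move=> fx fy; apply: scoped_bigAnd => t.
by rewrite mem_iota add0n => /andP [_ tK]; apply: scoped_ColexBlock.
Qed.

Lemma scoped_VertexLe (fo : nat -> bool) i j :
  fo i -> fo j -> mso_scoped fo so (VertexLe K i j).
Proof.
move=> fi fj; rewrite /VertexLe [Colex _ _ _]lock /= -lock.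
by rewrite fi fj !soK ?orbT ?scoped_Colex.
Qed.

End Scoping.

Lemma OrderFormula_scoped K : mso_formula_xyZ K.+2 (OrderFormula K).
Proof.
rewrite /mso_formula_xyZ /OrderFormula /EdgeLe [VertexLe _ _ _]lock /= -lock.
by rewrite !scoped_VertexLe ?scoped_Colex ?orbT.
Qed.

Section Meaning.
Variables (T : finType) (R : rel T) (P : nat -> {set T}).
Hypothesis T0 : 0 < #|T|.

Definition has_end x := exists w, R w x.
Definition stair_edge u b := exists e, e \in P 1 /\ R u e /\ R b e.
Definition a_le x y := forall b, ~ b \in P 0 -> stair_edge y b -> stair_edge x b.
Definition layer_edge t a z := exists e, e \in P t.+2 /\ R a e /\ R z e.
Definition gain_a t x y :=
  exists a, a \in P 0 /\ layer_edge t a y /\ ~ layer_edge t a x.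
Definition gain t x y := (y \in P t.+2 /\ ~ x \in P t.+2) \/ gain_a t x y.
Definition gain_above K t x y := exists2 t', t' \in iota t.+1 (K - t.+1) & gain t' x y.
Definition gain_above_a K t a x y := gain_above K t x y \/
  exists a', a' \in P 0 /\ ~ a_le a' a /\ layer_edge t a' y /\ ~ layer_edge t a' x.
Definition block_cond K t x y :=
  ((x \in P t.+2 /\ ~ y \in P t.+2) -> gain_above K t x y \/ gain_a t x y) /\
  forall a, a \in P 0 -> layer_edge t a x /\ ~ layer_edge t a y -> gain_above_a K t a x y.
Definition colex_cond K x y := forall t, t < K -> block_cond K t x y.
Definition vertex_le K x y :=
  (x \in P 0 /\ ~ y \in P 0) \/ (x \in P 0 /\ y \in P 0 /\ a_le x y) \/
  (~ x \in P 0 /\ ~ y \in P 0 /\ colex_cond K x y).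
Definition edge_le K x y :=
  forall v, R v x /\ ~ R v y -> exists w, ~ vertex_le K w v /\ R w y /\ ~ R w x.
Definition order_rel K x y :=
  (~ has_end x /\ ~ has_end y /\ vertex_le K x y) \/ (~ has_end x /\ has_end y) \/
  (has_end x /\ has_end y /\ edge_le K x y).

Ltac upd_simpl := rewrite /upd /=; repeat match goal with
  |- context [?a == ?b] => rewrite (_ : (a == b) = false); last by lia end.

Lemma msat_IsEdge nu mu z : z != 2 -> msat R (IsEdge z) nu mu <-> has_end (nu z).
Proof. by move=> z2; apply: ex_iff => w /=; upd_simpl. Qed.

Lemma msat_StairEdge nu u b : u != 6 -> b != 6 ->
  msat R (StairEdge u b) nu P <-> stair_edge (nu u) (nu b).
Proof. by move=> u6 b6; apply: ex_iff => e /=; upd_simpl. Qed.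

Lemma msat_ALe nu i j : i != 5 -> i != 6 -> j != 5 -> j != 6 ->
  msat R (ALe i j) nu P <-> a_le (nu i) (nu j).
Proof.
move=> *; rewrite msat_all; apply: all_iff => b.
by rewrite !msat_imp !msat_StairEdge //; upd_simpl.
Qed.

Lemma msat_LayerEdge nu t a z : a != 9 -> z != 9 ->
  msat R (LayerEdge t a z) nu P <-> layer_edge t (nu a) (nu z).
Proof. by move=> a9 z9; apply: ex_iff => e /=; upd_simpl. Qed.

Lemma msat_GainA nu t x y : x < 5 -> y < 5 ->
  msat R (GainA t x y) nu P <-> gain_a t (nu x) (nu y).
Proof.
move=> x5 y5; have [x9 y9] : x != 9 /\ y != 9 by lia.
rewrite /GainA msat_ex; apply: ex_iff => a.
by rewrite !msat_and msat_neg !msat_LayerEdge //; upd_simpl.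
Qed.

Lemma msat_Gain nu t x y : x < 5 -> y < 5 ->
  msat R (Gain t x y) nu P <-> gain t (nu x) (nu y).
Proof. by move=> x5 y5; rewrite msat_or msat_GainA. Qed.

Lemma msat_GainAbove nu K t x y : x < 5 -> y < 5 ->
  msat R (GainAbove K t x y) nu P <-> gain_above K t (nu x) (nu y).
Proof.
move=> x5 y5; rewrite msat_bigOr //.
by split=> -[t' t'K Ht']; exists t' => //; apply/msat_Gain.
Qed.

Lemma msat_GainAboveA nu K t x y : x < 5 -> y < 5 ->
  msat R (GainAboveA K t x y) nu P <-> gain_above_a K t (nu 7) (nu x) (nu y).
Proof.
move=> x5 y5; have [x9 y9] : x != 9 /\ y != 9 by lia.
rewrite msat_or msat_GainAbove //.
rewrite /gain_above_a msat_ex.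
have E a' : msat R (MAnd (MMem 8 0) (MAnd (MNeg (ALe 8 7))
                  (MAnd (LayerEdge t 8 y) (MNeg (LayerEdge t 8 x))))) (upd nu 8 a') P <->
    a' \in P 0 /\ ~ a_le a' (nu 7) /\ layer_edge t a' (nu y) /\ ~ layer_edge t a' (nu x).
  by rewrite !msat_and msat_neg msat_ALe // msat_neg !msat_LayerEdge //; upd_simpl.
by rewrite (ex_iff E).
Qed.

Lemma msat_ColexBlock nu K t x y : x < 5 -> y < 5 ->
  msat R (ColexBlock K t x y) nu P <-> block_cond K t (nu x) (nu y).
Proof.
move=> x5 y5; have [x9 y9] : x != 9 /\ y != 9 by lia.
rewrite msat_and msat_imp msat_or msat_GainAbove // msat_GainA // msat_all.
have E a : msat R (MImp (MMem 7 0) (MImp (MAnd (LayerEdge t 7 x)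
               (MNeg (LayerEdge t 7 y))) (GainAboveA K t x y))) (upd nu 7 a) P <->
    (a \in P 0 -> layer_edge t a (nu x) /\ ~ layer_edge t a (nu y) ->
     gain_above_a K t a (nu x) (nu y)).
  rewrite msat_imp msat_imp msat_GainAboveA // msat_and msat_neg !msat_LayerEdge //.
  by upd_simpl.
by rewrite (all_iff E).
Qed.

Lemma msat_Colex nu K x y : x < 5 -> y < 5 ->
  msat R (Colex K x y) nu P <-> colex_cond K (nu x) (nu y).
Proof.
move=> x5 y5; rewrite msat_bigAnd //; apply: all_iff => t.
by rewrite mem_iota add0n msat_ColexBlock.
Qed.

Lemma msat_VertexLe nu K i j : i < 5 -> j < 5 ->
  msat R (VertexLe K i j) nu P <-> vertex_le K (nu i) (nu j).
Proof.
move=> i5 j5; have [? ? ? ?] : [/\ i != 5, i != 6, j != 5 & j != 6] by split; lia.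
by rewrite !msat_or !msat_and msat_ALe // msat_Colex // !msat_neg.
Qed.

Lemma msat_EdgeLe nu K :
  msat R (EdgeLe K) nu P <-> edge_le K (nu 0) (nu 1).
Proof.
rewrite msat_all; apply: all_iff => v.
rewrite msat_imp msat_and msat_neg msat_ex; apply: imp_iff => //; apply: ex_iff => w.
by rewrite msat_and msat_neg msat_VertexLe // msat_and msat_neg; upd_simpl.
Qed.

Lemma defined_OrderFormula K a b :
  defined_rel R (OrderFormula K) P a b <-> order_rel K a b.
Proof.
rewrite /defined_rel /OrderFormula !msat_or !msat_and msat_EdgeLe.
by rewrite msat_VertexLe // !msat_neg !msat_IsEdge.
Qed.

End Meaning.

Section Positions.
Variables (T : finType) (S : {set T}).

Definition pos (v : T) := index v (enum S).

Lemma pos_lt v : v \in S -> pos v < #|S|.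
Proof. by move=> vS; rewrite /pos cardE index_mem mem_enum. Qed.

Lemma pos_inj v w : v \in S -> w \in S -> pos v = pos w -> v = w.
Proof. by move=> vS wS; apply: (index_inj v); rewrite mem_enum. Qed.

Lemma pos_surj i : i < #|S| -> exists2 v, v \in S & pos v = i.
Proof.
move=> iS; have [v0 _] : exists v0, v0 \in S by apply/card_gt0P; apply: leq_ltn_trans iS.
exists (nth v0 (enum S) i); first by rewrite -mem_enum mem_nth // -cardE.
by rewrite /pos index_uniq ?enum_uniq // -cardE.
Qed.

End Positions.

(** The vertex [w] of B is identified by the binary word
    [word w] of its position; offset [o] of block [t] of that word is stored
    in Z_(t+2): by the vertex [w] itself if [o = 0], and by the A-B edge from
    the vertex of A at position [o - 1] otherwise.  Z_1 contains the A-B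
    edges [u w] with [pos u <= pos w < n]; for [u], [u'] in A, the set of
    [w] so joined to [u'] is contained in that of [u] exactly when
    [pos u <= pos u'], which makes the order on A definable. *)

Section Knm.
Variables (G : graph) (A B : {set gV G}).
Hypotheses (AB_disj : [disjoint A & B]) (AB_cover : A :|: B = [set: gV G]).
Hypotheses (AB_le : #|A| <= #|B|) (AB_complete : forall a b, a \in A -> b \in B -> gadj a b).

Local Notation n := #|A|.
Local Notation U := (inc_univ G).

Lemma notin_A v : (v \notin A) = (v \in B).
Proof.
apply/idP/idP => [vA | vB]; first by have := in_setT v; rewrite -AB_cover in_setU (negbTE vA).
by rewrite (disjointFl AB_disj vB).
Qed.

Definition word (w : gV G) := bit (pos B w).

Definition vertices_where (Q : pred (gV G)) : {set U} :=
  [set x | if x is inl v then Q v else false].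
Definition edges_where (Q' : gV G -> gV G -> bool) : {set U} :=
  [set x | if x is inr e then [exists u, exists w,
     [&& u \in A, w \in B, Q' u w & val e == [set u; w]]] else false].

Definition stair_pair u w := (pos A u <= pos B w) && (pos B w < n).
Definition layer_vertex t w := (w \in B) && word w (t * n.+1).
Definition layer_pair t u w := word w (t * n.+1 + (pos A u).+1).

Definition ZA := vertices_where (mem A).
Definition ZStair := edges_where stair_pair.
Definition ZLayer t := vertices_where (layer_vertex t) :|: edges_where (layer_pair t).

Definition params K j :=
  if j == 0 then ZA else if j == 1 then ZStair else if j < K.+2 then ZLayer j.-2 else set0.

Lemma has_endE (x : U) : has_end (@inc G) x <-> if x is inr _ then True else False.
Proof.
case: x => [v | [S S_edge]] /=; first by split=> // -[[] ].
split=> // _; have /existsP [u /existsP [w /andP [_ /eqP S_uw]]] := S_edge.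
by exists (inl u); rewrite /= S_uw !inE eqxx.
Qed.

Lemma joined_by (Z : {set U}) (Q' : gV G -> gV G -> bool) u w :
  (forall e, (inr e \in Z) = (inr e \in edges_where Q')) -> u \in A -> w \in B ->
  (exists e, e \in Z /\ @inc G (inl u) e /\ @inc G (inl w) e) <-> Q' u w.
Proof.
move=> ZQ uA wB; split=> [[[v|e] [eQ [ue we]]] // | Quw].
  move: eQ ue we; rewrite ZQ inE => /existsP [u0 /existsP [w0 /and4P [u0A w0B Q0 /eqP e0]]].
  rewrite /= e0 !inE => /orP [/eqP -> | /eqP uw0].
    by case/orP=> [/eqP wu0 | /eqP -> //]; move: u0A; rewrite -wu0 (disjointFl AB_disj wB).
  by move: uA; rewrite uw0 (disjointFl AB_disj w0B).
have uw : is_edge [set u; w].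
  by apply/existsP; exists u; apply/existsP; exists w; rewrite AB_complete ?eqxx.
exists (inr (exist (@is_edge G) _ uw)); rewrite ZQ /= !inE !eqxx orbT; split=> //.
by apply/existsP; exists u; apply/existsP; exists w; rewrite uA wB Quw eqxx.
Qed.

Variable K : nat.
(* Each vertex of B is identified by a word of [K] blocks. *)
Hypothesis B_small : #|B| <= 2 ^ (K * n.+1).
Local Notation P := (params K).
Local Notation R := (@inc G).

Lemma inZA (x : U) : (x \in P 0) = if x is inl v then v \in A else false.
Proof. by rewrite inE. Qed.

Lemma params_layer t : t < K -> P t.+2 = ZLayer t.
Proof. by move=> tK; rewrite /params /= !ltnS tK. Qed.

Lemma layer_vertexE t w : t < K -> w \in B -> (inl w \in P t.+2) = word w (t * n.+1).
Proof. by move=> tK wB; rewrite params_layer // !inE /layer_vertex wB orbF. Qed.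

Lemma stair_edgeE u w : u \in A -> w \in B ->
  stair_edge R P (inl u) (inl w) <-> stair_pair u w.
Proof. exact: joined_by. Qed.

Lemma layer_edgeE t u w : t < K -> u \in A -> w \in B ->
  layer_edge R P t (inl u) (inl w) <-> layer_pair t u w.
Proof. by move=> tK; apply: joined_by => e; rewrite params_layer // !inE. Qed.

Lemma a_leE u u' : u \in A -> u' \in A -> a_le R P (inl u) (inl u') <-> pos A u <= pos A u'.
Proof.
move=> uA u'A; split=> [le_uu' | le_pos [w | e] wA]; last by move=> [? [? [? //]]].
  have [w wB wu'] : exists2 w, w \in B & pos B w = pos A u'.
    by apply: pos_surj; apply: leq_trans AB_le; apply: pos_lt.
  have wA : ~ inl w \in P 0 by rewrite inZA (disjointFl AB_disj wB).
  have := le_uu' (inl w) wA; rewrite !stair_edgeE // /stair_pair wu' leqnn pos_lt //.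
  by move=> /(_ isT) /andP [].
have wB : w \in B by rewrite -notin_A; apply/negP; rewrite inZA in wA.
rewrite !stair_edgeE // /stair_pair => /andP [le_u'w ->].
by rewrite (leq_trans le_pos le_u'w).
Qed.

(* Offsets [1 .. n] of a block are the successors of the positions in A. *)
Lemma ex_offset (X : nat -> Prop) m :
  (exists2 u, u \in A & m <= pos A u /\ X (pos A u).+1) <->
  exists o, [/\ m < o, o < n.+1 & X o].
Proof.
split=> [[u uA [mu Xu]] | [[|o] [mo on Xo]] //]; first by exists (pos A u).+1; rewrite !ltnS pos_lt.
by have [u uA uo] := pos_surj on; exists u => //; rewrite uo.
Qed.

Lemma all_offset (X : nat -> Prop) :
  (forall o, o < n.+1 -> X o) <-> X 0 /\ forall u, u \in A -> X (pos A u).+1.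
Proof.
split=> [H | [X0 XA] [|o] on //]; first by split=> [|u uA]; apply: H; rewrite ?ltnS ?pos_lt.
by have [u uA <-] := pos_surj on; apply: XA.
Qed.

Section Words.
Variables (b b' : gV G).
Hypotheses (bB : b \in B) (b'B : b' \in B).
Local Notation f := (word b).
Local Notation g := (word b').

Lemma gain_aE t : t < K -> gain_a R P t (inl b) (inl b') <->
  exists o, [/\ 0 < o, o < n.+1 & beats g f (t * n.+1 + o)].
Proof.
move=> tK; rewrite -(ex_offset (fun o => beats g f (t * n.+1 + o))).
split=> [[x [xA [xb' nxb]]] | [u uA [_ /andP [ub' nub]]]].
  case: x xA xb' nxb => [u | e]; rewrite inZA // => uA.
  by rewrite !layer_edgeE // => ub' /negP nub; exists u => //; split=> //; apply/andP.
by exists (inl u); rewrite inZA !layer_edgeE //; split=> //; split=> //; apply/negP.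
Qed.

Lemma gainE t : t < K -> gain R P t (inl b) (inl b') <->
  exists2 o, o < n.+1 & beats g f (t * n.+1 + o).
Proof.
move=> tK; rewrite /gain gain_aE // !layer_vertexE //; split.
  case=> [[gb /negP fb] | [o [_ on gfo]]]; last by exists o.
  by exists 0; rewrite // addn0 /beats gb fb.
move=> [[|o] on gfo]; last by right; exists o.+1.
by left; move: gfo; rewrite addn0 => /andP [-> /negP].
Qed.

Lemma gain_aboveE t : gain_above R P K t (inl b) (inl b') <-> beats_above f g K n t.
Proof.
have iotaE t' : (t' \in iota t.+1 (K - t.+1)) = (t < t' < K).
  by rewrite mem_iota; apply/andP/andP; lia.
split=> [[t'] | [t' [tt' t'K gt']]].
  by rewrite iotaE => /andP [tt' t'K] /gainE gt'; exists t'; split=> //; apply: gt'.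
by exists t'; rewrite ?iotaE ?tt' //; apply/gainE.
Qed.

Lemma gain_above_aE t u : t < K -> u \in A ->
  gain_above_a R P K t (inl u) (inl b) (inl b') <->
  beats_above f g K n t \/ exists o, [/\ (pos A u).+1 < o, o < n.+1 & beats g f (t * n.+1 + o)].
Proof.
move=> tK uA; rewrite /gain_above_a gain_aboveE -(ex_offset (fun o => beats g f (t * n.+1 + o))).
suff -> : (exists a', a' \in P 0 /\ ~ a_le R P a' (inl u) /\ layer_edge R P t a' (inl b') /\
                      ~ layer_edge R P t a' (inl b)) <->
          exists2 u', u' \in A & (pos A u).+1 <= pos A u' /\ beats g f (t * n.+1 + (pos A u').+1)
  by [].
split=> [[x [xA [le_xu [xb' nxb]]]] | [u' u'A [lt_uu' /andP [u'b' nu'b]]]].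
  case: x xA le_xu xb' nxb => [u' | e]; rewrite inZA // => u'A.
  rewrite a_leE // !layer_edgeE // => /negP; rewrite -ltnNge => lt_uu' u'b' /negP nu'b.
  by exists u' => //; split=> //; apply/andP.
exists (inl u'); rewrite inZA a_leE // !layer_edgeE //; split=> //.
by split; [apply/negP; rewrite -ltnNge | split=> //; apply/negP].
Qed.

Lemma block_condE t : t < K ->
  block_cond R P K t (inl b) (inl b') <-> colex_block f g K n t.
Proof.
move=> tK; rewrite /colex_block all_offset /block_cond addn0.
rewrite gain_aboveE gain_aE // !layer_vertexE //.
split=> [[H0 HA] | [H0 HA]]; split.
- by move=> /andP [fb /negP gb]; apply: H0.
- move=> u uA /andP [fu /negP gu]; apply/gain_above_aE => //.
  by apply: HA; rewrite ?inZA ?layer_edgeE.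
- by move=> [fb /negP gb]; apply: H0; apply/andP.
- move=> [u|e]; rewrite inZA // => uA; rewrite !layer_edgeE // => -[fu /negP gu].
  by apply/gain_above_aE => //; apply: HA => //; apply/andP.
Qed.

Lemma colex_condE : colex_cond R P K (inl b) (inl b') <-> pos B b <= pos B b'.
Proof.
have word_small w : w \in B -> pos B w < 2 ^ (K * n.+1).
  by move=> wB; apply: leq_trans B_small; apply: pos_lt.
rewrite -(modn_small (word_small b bB)) -(modn_small (word_small b' b'B)) -!binval_bit.
rewrite -colex_binval colex_blocks /colex_cond.
by split=> H t tK; apply/block_condE/H.
Qed.

End Words.

Definition vrank v := if v \in A then pos A v else n + pos B v.

Lemma vrank_lt v : vrank v < n + #|B|.
Proof.
rewrite /vrank; case: ifPn => [vA | /negbTE vA]; first by have := pos_lt vA; lia.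
by have := @pos_lt _ B v; rewrite -notin_A vA; lia.
Qed.

Lemma vrank_inj v w : vrank v = vrank w -> v = w.
Proof.
rewrite /vrank; case: ifPn => vA; case: ifPn => wA E.
- exact: pos_inj E.
- by have := pos_lt vA; lia.
- by have := pos_lt wA; lia.
- by move: vA wA; rewrite !notin_A => vB wB; apply: (pos_inj vB wB); lia.
Qed.

Lemma vertex_leE v w : vertex_le R P K (inl v) (inl w) <-> vrank v <= vrank w.
Proof.
rewrite /vertex_le !inZA /vrank.
case: ifPn => vA; case: ifPn => wA.
- by rewrite a_leE //; intuition.
- by split=> _; [have := pos_lt vA; lia | left; split=> //; apply/negP].
- by split=> [ | le]; [intuition | have := pos_lt wA; lia].
- move: vA wA; rewrite !notin_A => vB wB.
  by rewrite colex_condE // leq_add2l; intuition.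
Qed.

(* An edge is identified by the word of the ranks of its ends; the edge
   order compares these words colexicographically. *)
Definition ends_word (e : edge_t G) p := [exists v, (v \in val e) && (vrank v == p)].

Lemma ends_word_vrank e v : ends_word e (vrank v) = (v \in val e).
Proof.
apply/existsP/idP => [[v' /andP [v'e /eqP /vrank_inj <-]] // | ve].
by exists v; rewrite ve eqxx.
Qed.

Lemma edge_leE e e' : edge_le R P K (inr e) (inr e') <->
  binval (ends_word e) (n + #|B|) <= binval (ends_word e') (n + #|B|).
Proof.
rewrite -colex_binval; split=> [H p pN /andP [/existsP [v /andP [ve /eqP vp]] ne'p] | H].
  have nve' : ~ @inc G (inl v) (inr e') by apply/negP; rewrite /= -ends_word_vrank vp.
  have [x [xv [xe' nxe]]] := H (inl v) (conj ve nve').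
  case: x xv xe' nxe => [w|//]; rewrite vertex_leE => /negP; rewrite -ltnNge => vw we' nwe.
  exists (vrank w); split; [by rewrite -vp | exact: vrank_lt |].
  by rewrite /beats !ends_word_vrank; apply/andP; split=> //; apply/negP.
move=> [v | ? [] //] [] /= ve nve'.
have [p [vp pN /andP [/existsP [w /andP [we' /eqP wp]] nep]]] :
  exists p, [/\ vrank v < p, p < n + #|B| & beats (ends_word e') (ends_word e) p].
  by apply: H; rewrite ?vrank_lt // /beats !ends_word_vrank ve; apply/negP.
exists (inl w); rewrite vertex_leE; split; first by apply/negP; rewrite -ltnNge wp.
by split=> //; apply/negP; rewrite /= -ends_word_vrank wp.
Qed.

Definition rank (x : U) :=
  match x with inl v => vrank v | inr e => n + #|B| + binval (ends_word e) (n + #|B|) end.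

Lemma rank_inj : injective rank.
Proof.
move=> [v|e] [w|e'] /= E.
- by rewrite (vrank_inj E).
- by have := vrank_lt v; lia.
- by have := vrank_lt w; lia.
have {}E := binval_inj (addnI E).
congr inr; apply: val_inj; apply/setP => v.
by rewrite -!ends_word_vrank E ?vrank_lt.
Qed.

Lemma order_relE x y : order_rel R P K x y <-> rank x <= rank y.
Proof.
rewrite /order_rel !has_endE; case: x => [v|e]; case: y => [w|e'] /=.
- by rewrite vertex_leE; intuition.
- by split=> _; [have := vrank_lt v; lia | intuition].
- by split=> [ | le]; [intuition | have := vrank_lt w; lia].
- by rewrite edge_leE leq_add2l; intuition.
Qed.

Lemma params_high j : K.+2 <= j -> P j = set0.
Proof. by move=> Kj; rewrite /params ltnNge Kj; case: j Kj => [|[]]. Qed.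

Theorem OrderFormula_defines_order :
  0 < #|U| -> defines_order_on K.+2 (OrderFormula K) (@inc G).
Proof.
move=> U0; exists P; split; first exact: params_high.
apply: (linear_order_rank rank_inj) => x y.
by rewrite defined_OrderFormula // order_relE.
Qed.

End Knm.

Theorem lemma4p25 (s r : nat) (C : graph -> Prop) :
  (forall G : graph, C G ->
     exists n m : nat, n <= m /\ m <= 2 ^ (s * n + r) /\ supergraph_of_Knm G n m) ->
  MSO2_orderable C.
Proof.
move=> HC; exists (s + r).+2, (OrderFormula (s + r)); split.
  exact: OrderFormula_scoped.
move=> G CG U0; have [n [m [nm [m_small [A [B [AB_disj [AB_cover [An [Bm AB]]]]]]]]]] := HC G CG.
apply: (OrderFormula_defines_order AB_disj AB_cover _ AB) => //; first by rewrite An Bm.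
rewrite An Bm; apply: (leq_trans m_small); rewrite leq_pexp2l //; nia.
Qed.
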